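(* Let $G$ be generated by the random planted model with parameters $n,k,d,p$ where $d\le 2pk/3$, and then let a monotone adversary add arbitrary edges with both endpoints in $V\setminus S$, producing $\tilde G$. If $k\ge 6\sqrt{6n\log n/p}$, then with high probability (over the randomness of the random planted model) every vertex of $S$ has strictly smaller degree in $\tilde G$ than every vertex of $V\setminus S$; in particular, the set of $k$ vertices of smallest degree in $\tilde G$ is exactly $S$.
   Context: Random planted model with parameters $n,k,d,p$: $V$ is a set of $n$ vertices and $S\subset V$ an arbitrary subset with $|S|=k$; edges are added arbitrarily inside $S$ so that the induced graph on $S$ is a connected $d$-regular bipartite graph with parts $S_1,S_2$; each pair in $S\times(V\setminus S)$ and each pair in $(V\setminus S)\times(V\setminus S)$ is made an edge independently with probability $p$. *)

From mathcomp Require Import all_boot all_order all_algebra.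
From mathcomp Require Import boolp reals exp.
Set Implicit Arguments. Unset Strict Implicit. Unset Printing Implicit Defensive.
Import Order.TTheory GRing.Theory Num.Theory.

Local Open Scope ring_scope.

Section Planted.
Variable n : nat.
Notation V := 'I_n.

Definition planted_graph (S : {set V}) (d : nat) (H : rel V) : Prop :=
  [/\ (forall u v, H u v = H v u) /\ (forall u, ~~ H u u),
      (forall u v, H u v -> (u \in S) && (v \in S)),
      (forall u, u \in S -> #|[set v | H u v]| = d),
      (exists S1 S2 : {set V}, [/\ [disjoint S1 & S2], S1 :|: S2 = S &
          forall u v, H u v -> ((u \in S1) && (v \in S2)) || ((u \in S2) && (v \in S1))])
    & (forall u v, u \in S -> v \in S -> connect H u v)].

(* The unordered pairs {u,v} (encoded as (u,v) with u < v) that are random: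
   those in S x (V\S) and in (V\S) x (V\S). *)
Definition random_pairs (S : {set V}) : {set V * V} :=
  [set e : V * V | (e.1 < e.2)%N & ~~ ((e.1 \in S) && (e.2 \in S))].

(* Probability of the outcome X (the set of random pairs that become edges):
   each random pair is an edge independently with probability p. *)
Definition outcome_prob (R : realType) (p : R) (S : {set V}) (X : {set V * V}) : R :=
  if X \subset random_pairs S then
    \prod_(e in random_pairs S) (if e \in X then p else 1 - p)
  else 0.

Definition adj (H : rel V) (X : {set V * V}) (A : rel V) (u v : V) : bool :=
  (u != v) && [|| H u v, (u, v) \in X, (v, u) \in X, A u v | A v u].

Definition deg (H : rel V) (X : {set V * V}) (A : rel V) (u : V) : nat :=
  #|[set v | adj H X A u v]|.

Definition adversary (S : {set V}) (A : rel V) : Prop :=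
  forall u v, A u v -> (u \notin S) && (v \notin S).

Definition good_event (S : {set V}) (H : rel V) (X : {set V * V}) : Prop :=
  forall A : rel V, adversary S A ->
    (forall u v, u \in S -> v \notin S -> (deg H X A u < deg H X A v)%N) /\
    (forall T : {set V}, #|T| = #|S| ->
       (forall u v, u \in T -> v \notin T -> (deg H X A u <= deg H X A v)%N) ->
       T = S).

Definition prob_good (R : realType) (p : R) (S : {set V}) (H : rel V) : R :=
  \sum_(X : {set V * V} | `[< good_event S H X >]) outcome_prob p S X.

End Planted.

From mathcomp Require Import all_boot all_order all_algebra.
From mathcomp Require Import boolp reals exp sequences.
From mathcomp Require Import ring lra zify.
Set Implicit Arguments. Unset Strict Implicit. Unset Printing Implicit Defensive.
Import Order.TTheory GRing.Theory Num.Theory.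
Local Open Scope ring_scope.

(* A vertex of S has degree at most d plus its number of random edges, a
   Binomial(n - k, p) variable, while a vertex outside S (whatever the adversary
   adds) has degree at least its number of random edges, a Binomial(n - 1, p)
   variable.  The means differ by (k - 1) p, which exceeds d + 2t for
   t ~ p sqrt (n log n / p).  An exponential-moment (Chernoff) bound shows that
   each of the n degrees exceeds its mean by t, resp. falls short of it by t,
   with probability at most n^(-243/220), and a union bound over the vertices
   finishes the argument. *)

Section RandomDegree.
Variable n : nat.
Notation V := 'I_n.

Definition incident (w : V) (e : V * V) := (e.1 == w) || (e.2 == w).
Definition other_end (w : V) (e : V * V) := if e.1 == w then e.2 else e.1.

Definition rdeg (X : {set V * V}) (w : V) := #|[set e in X | incident w e]|.

Definition random_incident (S : {set V}) (w : V) :=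
  [set e in random_pairs S | incident w e].

Lemma random_pairs_lt (S : {set V}) e : e \in random_pairs S -> (e.1 < e.2)%N.
Proof. by rewrite inE => /andP[]. Qed.

Lemma other_end_inj (w : V) (P : {set V * V}) :
  (forall e, e \in P -> (e.1 < e.2)%N) ->
  {in [set e in P | incident w e] &, injective (other_end w)}.
Proof.
move=> ltP [a b] [a' b'] /setIdP[/ltP /= ab i1] /setIdP[/ltP /= ab' i2].
rewrite /other_end /=; rewrite /incident /= in i1 i2.
case: (a =P w) i1 => [aw|na] /= i1; case: (a' =P w) i2 => [aw'|na'] /= i2 E.
- by subst.
- by move/eqP: i2 => i2; subst; lia.
- by move/eqP: i1 => i1; subst; lia.
- by move/eqP: i1 => i1; move/eqP: i2 => i2; subst.
Qed.

Lemma deg_le_planted_rdeg (H : rel V) (X : {set V * V}) (A : rel V) S d u :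
  planted_graph S d H -> adversary S A -> u \in S ->
  (deg H X A u <= d + rdeg X u)%N.
Proof.
move=> [_ _ degH _ _] advA uS.
rewrite /deg -(degH u uS) /rdeg.
apply: (@leq_trans #|[set v | H u v] :|: other_end u @: [set e in X | incident u e]|).
  apply: subset_leq_card; apply/subsetP => v; rewrite !inE /adj.
  case/andP=> uv /orP [h|/orP [h|/orP [h|/orP [h|h]]]].
  - by rewrite h.
  - apply/orP; right; apply/imsetP; exists (u, v).
      by rewrite !inE h /incident eqxx.
    by rewrite /other_end /= eqxx.
  - apply/orP; right; apply/imsetP; exists (v, u).
      by rewrite !inE h /incident eqxx orbT.
    by rewrite /other_end /= eq_sym (negbTE uv).
  - by move: (advA _ _ h); rewrite uS.
  - by move: (advA _ _ h); rewrite uS andbF.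
rewrite cardsU; apply: leq_trans (leq_subr _ _) _.
by rewrite leq_add2l leq_imset_card.
Qed.

Lemma rdeg_le_deg (H : rel V) (X : {set V * V}) (A : rel V) S v :
  X \subset random_pairs S -> (rdeg X v <= deg H X A v)%N.
Proof.
move=> XS; rewrite /rdeg /deg.
have ltX e : e \in X -> (e.1 < e.2)%N.
  by move=> eX; exact: random_pairs_lt (subsetP XS _ eX).
rewrite -(card_in_imset (other_end_inj (w := v) ltX)).
apply: subset_leq_card; apply/subsetP => x /imsetP [[a b] /setIdP [eX ie] ->].
have /= ab := ltX _ eX.
rewrite inE /adj /other_end /=; rewrite /incident /= in ie.
case: (a =P v) ie => [av|na] /= ie.
- subst a; have -> : v != b by apply/eqP => E; subst; lia.
  by rewrite eX orbT.
- move/eqP: ie => ie; subst b.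
  have -> : v != a by apply/eqP => E; subst; lia.
  by rewrite eX !orbT.
Qed.

Lemma card_random_incident_in (S : {set V}) u : u \in S ->
  (#|random_incident S u| <= n - #|S|)%N.
Proof.
move=> uS.
rewrite -(card_in_imset (other_end_inj (w := u) (@random_pairs_lt S))).
have -> : (n - #|S| = #|~: S|)%N by rewrite [RHS]cardsCs setCK card_ord.
apply: subset_leq_card; apply/subsetP => x /imsetP [[a b] /setIdP [eX ie] ->].
move: eX; rewrite !inE /= /other_end /= => /andP [_ nb].
rewrite /incident /= in ie.
case: (a =P u) ie => [au|na] /= ie; first by subst; move: nb; rewrite uS.
by move/eqP: ie => ie; subst b; move: nb; rewrite uS andbT.
Qed.

Lemma card_random_incident_notin (S : {set V}) v : v \notin S ->
  (n - 1 <= #|random_incident S v|)%N.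
Proof.
move=> vS.
rewrite -(card_in_imset (other_end_inj (w := v) (@random_pairs_lt S))).
have -> : (n - 1 = #|[set~ v]|)%N by rewrite cardsC1 card_ord subn1.
apply: subset_leq_card; apply/subsetP => x; rewrite !inE => xv.
case: (ltngtP v x) => [vx|xv'|E]; last by move: xv; rewrite -val_eqE /= E eqxx.
- apply/imsetP; exists (v, x); last by rewrite /other_end /= eqxx.
  by rewrite !inE /= vx (negbTE vS) /incident eqxx.
- apply/imsetP; exists (x, v); last by rewrite /other_end /= (negbTE xv).
  by rewrite !inE /= xv' (negbTE vS) andbF /incident eqxx orbT.
Qed.

Lemma good_event_of_threshold (S : {set V}) (H : rel V) d (X : {set V * V})
    (R : realType) (th : R) :
  planted_graph S d H -> X \subset random_pairs S ->
  (forall u, u \in S -> (rdeg X u)%:R < th - d%:R) ->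
  (forall v, v \notin S -> th < (rdeg X v)%:R) ->
  good_event S H X.
Proof.
move=> PG XS ltS gtS A advA.
have lt_deg u v : u \in S -> v \notin S -> (deg H X A u < deg H X A v)%N.
  move=> uS vS; apply: leq_ltn_trans (deg_le_planted_rdeg X PG advA uS) _.
  apply: leq_trans _ (rdeg_le_deg H A v XS).
  rewrite -(ltr_nat R) natrD.
  by have := ltS u uS; have := gtS v vS; lra.
split=> // T cardT lowT.
apply/eqP; rewrite eq_sym eqEcard cardT leqnn andbT.
apply/subsetP => u uS; apply/negPn/negP => uT.
have /subsetPn [v vT vS] : ~~ (T \subset S).
  apply/negP => TS; have /eqP E : T == S by rewrite eqEcard TS cardT /=.
  by subst; rewrite uS in uT.
by have := lowT v u vT uT; rewrite leqNgt lt_deg.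
Qed.

End RandomDegree.

Section OutcomeProbability.
Variables (R : realType) (n : nat) (p : R) (S : {set 'I_n}).
Hypotheses (p_ge0 : 0 <= p) (p_le1 : p <= 1).
Notation V := 'I_n.

Lemma sum_outcome_prob_prod (g : V * V -> R) :
  \sum_(X : {set V * V}) outcome_prob p S X * \prod_(e in X) g e =
  \prod_(e in random_pairs S) (1 - p + p * g e).
Proof.
set RP := random_pairs S.
have -> : \prod_(e in RP) (1 - p + p * g e) =
  \prod_e ((if e \in RP then p * g e else 0) + (if e \in RP then 1 - p else 1)).
  rewrite [LHS]big_mkcond /=; apply: eq_bigr => e _.
  by case: ifP => _; rewrite ?add0r // addrC.
rewrite bigA_distr; apply: eq_bigr => X _.
rewrite /outcome_prob -/RP.
case: ifP => [XS|/negbT XS].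
  rewrite big_mkcond [X in _ * X]big_mkcond /= -big_split /=.
  apply: eq_bigr => e _.
  case eX: (e \in X); case eR: (e \in RP); rewrite ?mulr1 //.
  by move: (subsetP XS e); rewrite eX eR => /(_ isT).
have [e eX eR] := subsetPn XS.
by rewrite mul0r (bigD1 e) //= eX (negbTE eR) mul0r.
Qed.

Lemma outcome_prob_ge0 X : 0 <= outcome_prob p S X.
Proof.
rewrite /outcome_prob; case: ifP => // _.
by apply: prodr_ge0 => e _; case: ifP; rewrite // subr_ge0.
Qed.

Lemma sum_outcome_prob : \sum_(X : {set V * V}) outcome_prob p S X = 1.
Proof.
have := sum_outcome_prob_prod (fun _ => 1).
rewrite (eq_bigr (fun e => 1)) => [|e _]; last by rewrite mulr1 subrK.
rewrite big1_eq => <-; apply: eq_bigr => X _.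
by rewrite big1_eq mulr1.
Qed.

Lemma prod_cond_const (A : {set V * V}) (P : pred (V * V)) (c : R) :
  \prod_(e in A) (if P e then c else 1) = c ^+ #|[set e in A | P e]|.
Proof. by rewrite -big_mkcondr -prodr_const; apply: eq_bigl => e; rewrite inE. Qed.

Lemma rdeg_moment (w : V) (b : R) :
  \sum_(X : {set V * V}) outcome_prob p S X * b ^+ rdeg X w =
  (1 - p + p * b) ^+ #|random_incident S w|.
Proof.
under eq_bigr do rewrite /rdeg -prod_cond_const.
rewrite sum_outcome_prob_prod -prod_cond_const; apply: eq_bigr => e _ /=.
by case: ifP => _; rewrite ?mulr1 ?subrK.
Qed.

(* Markov's inequality for the random variable K * b ^ rdeg X w. *)
Lemma rdeg_moment_tail (w : V) (Q : pred {set V * V}) (K b : R) :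
  0 <= K -> 0 <= b -> (forall X, Q X -> 1 <= K * b ^+ rdeg X w) ->
  \sum_(X | Q X) outcome_prob p S X <=
    K * (1 - p + p * b) ^+ #|random_incident S w|.
Proof.
move=> K_ge0 b_ge0 QK.
rewrite -rdeg_moment mulr_sumr big_mkcond /=; apply: ler_sum => X _.
have := outcome_prob_ge0 X; rewrite mulrCA; case: ifP => QX pX.
  by rewrite -[X in X <= _]mulr1; apply: ler_wpM2l => //; apply: QK.
by apply/mulr_ge0/mulr_ge0 => //; apply: exprn_ge0.
Qed.

Lemma expR_le_quadratic (x : R) : 0 <= x -> x <= 1/11 ->
  expR x <= 1 + x + 11/10 * x ^+ 2.
Proof.
move=> x_ge0 x_le.
have := expR_ge1Dx (- x); rewrite expRN => h.
have ex_gt0 := expR_gt0 x.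
have : expR x * (1 - x) <= 1.
  by have := ler_wpM2l (ltW ex_gt0) h; rewrite mulfV ?gt_eqF.
nra.
Qed.

Lemma expRN_le_quadratic (x : R) : 0 <= x -> expR (- x) <= 1 - x + 11/10 * x ^+ 2.
Proof.
move=> x_ge0.
have := expR_ge1Dx x; have := expR_gt0 (- x).
have : expR (- x) * expR x = 1 by rewrite -expRD addNr expR0.
nra.
Qed.

Lemma exprn_le_expR (a : R) m : 0 <= 1 + a -> (1 + a) ^+ m <= expR (m%:R * a).
Proof.
move=> a_ge; rewrite expRM_natl; apply: lerXn2r; rewrite ?nnegrE ?expR_ge0 //.
exact: expR_ge1Dx.
Qed.

Lemma rdeg_upper_tail (w : V) (lam a M : R) :
  0 <= lam -> lam <= 1/11 -> #|random_incident S w|%:R <= M ->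
  \sum_(X | a <= (rdeg X w)%:R) outcome_prob p S X <=
    expR (M * p * (lam + 11/10 * lam ^+ 2) - lam * a).
Proof.
move=> lam_ge0 lam_le mM.
apply: le_trans (rdeg_moment_tail (K := expR (- (lam * a))) (b := expR lam) _ _ _) _.
- exact: expR_ge0.
- exact: expR_ge0.
- move=> X aX; rewrite -expRM_natl -expRD -[X in X <= _]expR0 ler_expR.
  by have := ler_wpM2l lam_ge0 aX; lra.
have e_ge := expR_ge1Dx lam; have e_le := expR_le_quadratic lam_ge0 lam_le.
have p_e : 0 <= p * (expR lam - 1) by apply: mulr_ge0 => //; lra.
have -> : 1 - p + p * expR lam = 1 + p * (expR lam - 1) by ring.
apply: le_trans (ler_wpM2l (expR_ge0 _) (exprn_le_expR _ _)) _; first lra.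
rewrite -expRD ler_expR.
have := ler_wpM2r p_e mM.
have : p * (expR lam - 1) <= p * (lam + 11/10 * lam ^+ 2) by apply: ler_wpM2l => //; lra.
have : 0 <= M by apply: le_trans mM; rewrite ler0n.
nra.
Qed.

Lemma rdeg_lower_tail (w : V) (lam a M : R) :
  0 <= lam -> 0 <= M -> M <= #|random_incident S w|%:R ->
  \sum_(X | (rdeg X w)%:R <= a) outcome_prob p S X <=
    expR (lam * a - M * p * (lam - 11/10 * lam ^+ 2)).
Proof.
move=> lam_ge0 M_ge0 Mm.
apply: le_trans (rdeg_moment_tail (K := expR (lam * a)) (b := expR (- lam)) _ _ _) _.
- exact: expR_ge0.
- exact: expR_ge0.
- move=> X Xa; rewrite -expRM_natl -expRD -[X in X <= _]expR0 ler_expR.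
  by have := ler_wpM2l lam_ge0 Xa; lra.
have e_le := expRN_le_quadratic lam_ge0.
have e_le1 : expR (- lam) <= 1 by rewrite -expR0 ler_expR; lra.
have p_e : p * (expR (- lam) - 1) <= 0.
  by rewrite -(mulr0 p); apply: ler_wpM2l => //; lra.
have -> : 1 - p + p * expR (- lam) = 1 + p * (expR (- lam) - 1) by ring.
apply: le_trans (ler_wpM2l (expR_ge0 _) (exprn_le_expR _ _)) _.
  by have := p_le1; have := mulr_ge0 p_ge0 (expR_ge0 (- lam)); lra.
rewrite -expRD ler_expR.
have := ler_wnM2r p_e Mm.
have : p * (expR (- lam) - 1) <= p * (- lam + 11/10 * lam ^+ 2).
  by apply: ler_wpM2l => //; lra.
nra.
Qed.

Lemma prob_good_ge_union (H : rel V) (bad : V -> pred {set V * V}) :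
  (forall X : {set V * V}, X \subset random_pairs S -> (forall w, ~~ bad w X) -> good_event S H X) ->
  1 - \sum_w \sum_(X | bad w X) outcome_prob p S X <= prob_good p S H.
Proof.
move=> goodX.
have := sum_outcome_prob; rewrite (bigID (fun X => `[< good_event S H X >])) /=.
rewrite /prob_good => <-; rewrite -addrA gerDl subr_le0.
under [X in _ <= X]eq_bigr do rewrite big_mkcond /=.
rewrite exchange_big /= big_mkcond; apply: ler_sum => X _.
have pX := outcome_prob_ge0 X.
have sum_ge0 : 0 <= \sum_w (if bad w X then outcome_prob p S X else 0).
  by apply: sumr_ge0 => w _; case: ifP.
case: ifP => [/asboolPn notgood|//].
case XS : (X \subset random_pairs S); last by rewrite {1}/outcome_prob XS.
have [w bwX] : exists w, bad w X.
  apply/existsP; apply: contraT; rewrite negb_exists => /forallP nobad.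
  by case: notgood; apply: goodX.
rewrite (bigD1 w) //= bwX lerDl; apply: sumr_ge0 => w' _; by case: ifP.
Qed.

End OutcomeProbability.

Section Separation.
Variables (R : realType) (n k d : nat) (p s L : R) (S : {set 'I_n}) (H : rel 'I_n).
Hypotheses (p_gt0 : 0 < p) (p_le1 : p <= 1) (cardS : #|S| = k).
Hypotheses (PG : planted_graph S d H) (d_le : d%:R <= 2 * p * k%:R / 3).
Hypotheses (n_ge1 : 1 <= n%:R :> R) (s_ge0 : 0 <= s) (psE : p * s ^+ 2 = 6 * n%:R * L).
Hypotheses (L_ge5 : 5 <= L) (k_ge : 6 * s <= k%:R).

(* th lies t below the mean of an outside random degree, and th - d at least t
   above the mean of an inside one (sep_d_margin); lam minimises the Chernoff
   exponent 11/10 n p lam^2 - lam t, whose minimum is -(243/220) L. *)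
Let t := 9 * p * s / 10.
Let th := (n%:R - 1) * p - t.
Let lam := 9 * s / (22 * n%:R).

Lemma card_le_n : k%:R <= n%:R :> R.
Proof.
by rewrite ler_nat -cardS; apply: leq_trans (max_card _) _; rewrite card_ord.
Qed.

Lemma sep_s_ge5 : 5 <= s.
Proof.
have : 30 <= s ^+ 2.
  have : 30 <= p * s ^+ 2 by rewrite psE; have := n_ge1; have := L_ge5; nra.
  have : p * s ^+ 2 <= s ^+ 2 by rewrite ler_piMl ?sqr_ge0.
  lra.
have := s_ge0; nra.
Qed.

Lemma sep_d_margin : d%:R + 2 * t <= (k%:R - 1) * p.
Proof.
have p_ge0 := ltW p_gt0; have s_ge := sep_s_ge5; have k_ge' := k_ge.
have : 0 <= p * (s - 5) by apply: mulr_ge0; lra.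
have : 0 <= p * (k%:R - 6 * s) by apply: mulr_ge0; lra.
rewrite /t; have := d_le; lra.
Qed.

Lemma sep_lam_ge0 : 0 <= lam.
Proof.
have n_ge := n_ge1; have s_ge := s_ge0.
by apply: divr_ge0; [lra | apply: mulr_ge0; lra].
Qed.

Lemma sep_lam_le : lam <= 1/11.
Proof.
have n_ge := n_ge1; have k_ge' := k_ge; have k_le := card_le_n.
by rewrite /lam ler_pdivrMr ?mulr_gt0 //; lra.
Qed.

Lemma sep_exponent : 11/10 * n%:R * p * lam ^+ 2 - lam * t = - (243/220) * L.
Proof.
have n_neq0 : n%:R != 0 :> R by rewrite gt_eqF //; have := n_ge1; lra.
transitivity (- (81/440) * (p * s ^+ 2) / n%:R); first by rewrite /lam /t; field.
by rewrite psE; field.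
Qed.

Definition sep_bad (w : 'I_n) (X : {set 'I_n * 'I_n}) : bool :=
  if w \in S then th - d%:R <= (rdeg X w)%:R else (rdeg X w)%:R <= th.

Lemma sep_bad_prob (w : 'I_n) :
  \sum_(X | sep_bad w X) outcome_prob p S X <= expR (- (243/220) * L).
Proof.
have exponent := sep_exponent; have margin := sep_d_margin.
have k_le := card_le_n; have n_ge := n_ge1; have p_ge0 := ltW p_gt0.
have lam_ge0 := sep_lam_ge0; have lam_sq : 0 <= lam ^+ 2 := sqr_ge0 lam.
rewrite /sep_bad; case wS : (w \in S).
- have m_le : #|random_incident S w|%:R <= n%:R - k%:R :> R.
    rewrite -cardS -natrB ?ler_nat ?card_random_incident_in //.
    by rewrite -(ler_nat R) cardS.
  apply: le_trans (rdeg_upper_tail p_ge0 p_le1 (th - d%:R) lam_ge0 sep_lam_le m_le) _.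
  have := ler_wpM2l lam_ge0 margin.
  have : 0 <= k%:R * p * lam ^+ 2 by apply: mulr_ge0 => //; rewrite mulr_ge0 ?ler0n.
  rewrite ler_expR /th; lra.
- have m_ge : n%:R - 1 <= #|random_incident S w|%:R :> R.
    have n_pos : (1 <= n)%N by rewrite -(ler_nat R).
    by rewrite -(natrB _ n_pos) ler_nat card_random_incident_notin ?wS.
  have M_ge0 : 0 <= n%:R - 1 :> R by lra.
  apply: le_trans (rdeg_lower_tail p_ge0 p_le1 th lam_ge0 M_ge0 m_ge) _.
  have : 0 <= p * lam ^+ 2 by apply: mulr_ge0.
  rewrite ler_expR /th; lra.
Qed.

Lemma sep_good_event (X : {set 'I_n * 'I_n}) :
  X \subset random_pairs S -> (forall w, ~~ sep_bad w X) -> good_event S H X.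
Proof.
move=> XS notbad; apply: (good_event_of_threshold (th := th) PG XS) => w.
- by move=> wS; have := notbad w; rewrite /sep_bad wS -ltNge.
- by move=> wS; have := notbad w; rewrite /sep_bad (negbTE wS) -ltNge.
Qed.

End Separation.

Theorem lemma1p10 (R : realType) :
  forall eps : R, 0 < eps ->
  exists N : nat, forall (n k d : nat) (p : R) (S : {set 'I_n}) (H : rel 'I_n),
    (N <= n)%N ->
    0 < p -> p <= 1 ->
    #|S| = k ->
    planted_graph S d H ->
    d%:R <= 2 * p * k%:R / 3 ->
    6 * Num.sqrt (6 * n%:R * ln (n%:R) / p) <= k%:R ->
    1 - eps <= prob_good p S H.
Proof.
move=> eps eps_gt0.
pose K : R := Num.max 5 (- (220/23) * ln eps).
exists (Num.truncn (expR K)).+1 => n k d p S H n_ge p_gt0 p_le1 cardS PG d_le k_ge.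
have n_ge1 : 1 <= n%:R :> R by rewrite ler1n; apply: leq_trans n_ge.
set L := ln (n%:R : R) in k_ge; set s := Num.sqrt _ in k_ge.
have K_le : K <= L.
  rewrite -[K]expRK ler_ln ?posrE ?expR_gt0 ?(lt_le_trans ltr01 n_ge1) //.
  by apply/ltW/(lt_le_trans (truncnS_gt _)); rewrite ler_nat.
have [L_ge5 eps_le] : 5 <= L /\ - (220/23) * ln eps <= L.
  by split; apply: le_trans K_le; rewrite le_max lexx ?orbT.
have psE : p * s ^+ 2 = 6 * n%:R * L.
  rewrite sqr_sqrtr; first by field; rewrite gt_eqF.
  by rewrite divr_ge0 ?mulr_ge0 ?ltW //; lra.
apply: le_trans (prob_good_ge_union (ltW p_gt0) p_le1 (sep_good_event (p := p) (s := s) PG)).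
rewrite lerD2l lerN2.
apply: le_trans (ler_sum _ (fun w _ => sep_bad_prob p_gt0 p_le1 cardS d_le n_ge1
  (sqrtr_ge0 _) psE L_ge5 k_ge w)) _.
have nE : n%:R = expR L by rewrite lnK // posrE; lra.
rewrite sumr_const card_ord -[_ *+ n]mulr_natl nE -expRD -[eps]lnK ?posrE // ler_expR.
lra.
Qed.
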